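(* Consider the problem and algorithm AC2CD described in the context, let $\{x^k\}$ be a sequence produced by AC2CD, and assume $\lim_{k\to\infty}x^k=x^*$. Let $D^*_{\max}=\max_{i=1,\dots,n}D_i(x^* )$ (which is positive) and let $k_j$ be the first outer iteration such that \[ \|x^k-x^*\|_\infty<\frac{\tau}{\tau+1}D^*_{\max}\quad\text{for all } k\ge k_j. \] Then for all $k\ge k_j$, $j(k)\notin \mathcal A(x^* )$, where $\mathcal A(x^* )=\{i: x^*_i=l_i\}\cup\{i: x^*_i=u_i\}$.
   Context: Problem: minimize $f(x)$ subject to $e^T x = b$ and $l_i \le x_i \le u_i$ ($i=1,\dots,n$), where $n\ge 2$, $e$ is the all-ones vector, $b\in\mathbb{R}$, $l_i\in\mathbb{R}\cup\{-\infty\}$, $u_i\in\mathbb{R}\cup\{+\infty\}$, $l_i<u_i$, and $f:\mathbb{R}^n\to\mathbb{R}$ is continuously differentiable with $\nabla f$ Lipschitz continuous on $\mathbb{R}^n$. $\mathcal F$ is the feasible set, $e_i$ the $i$th unit vector. For $x\in\mathcal F$, $D_h(x)=\min\{x_h-l_h,u_h-x_h\}$. Algorithm AC2CD with parameters $\tau\in(0,1]$, $\gamma,\delta\in(0,1)$, $0<A_l\le A_u<\infty$ and starting point $x^0\in\mathcal F$: for $k=0,1,2,\dots$: let $D^k=\max_h D_h(x^k)$; choose $j(k)$ with $D_{j(k)}(x^k)\ge\tau D^k$; choose a permutation $(p^k_1,\dots,p^k_n)$ of $\{1,\dots,n\}$; set $z^{k,1}=x^k$; for $i=1,\dots,n$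 (inner iteration $(k,i)$): $g^{k,i}=\nabla_{j(k)}f(z^{k,i})-\nabla_{p^k_i}f(z^{k,i})$, $d^{k,i}=g^{k,i}(e_{p^k_i}-e_{j(k)})$; $\bar\alpha^{k,i}=\min\{u_{p^k_i}-z^{k,i}_{p^k_i},z^{k,i}_{j(k)}-l_{j(k)}\}/g^{k,i}$ if $g^{k,i}>0$, $=\min\{z^{k,i}_{p^k_i}-l_{p^k_i},u_{j(k)}-z^{k,i}_{j(k)}\}/|g^{k,i}|$ if $g^{k,i}<0$, $=0$ if $g^{k,i}=0$; choose $A^{k,i}\in[A_l,A_u]$, set $\Delta^{k,i}=\min\{\bar\alpha^{k,i},A^{k,i}\}$; starting from $\alpha=\Delta^{k,i}$, while $f(z^{k,i}+\alpha d^{k,i})>f(z^{k,i})+\gamma\alpha\nabla f(z^{k,i})^Td^{k,i}$ replace $\alpha$ by $\delta\alpha$; $\alpha^{k,i}$ is the final $\alpha$ and $z^{k,i+1}=z^{k,i}+\alpha^{k,i}d^{k,i}$. Then $x^{k+1}=z^{k,n+1}$. Standing assumptions: $\mathcal L_0=\{x\in\mathcal F: f(x)\le f(x^0)\}$ is nonempty and compact, and every $x\in\mathcal L_0$ has some index $i$ with $l_i<x_i<u_i$. *)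

(* R : realType, vectors are row vectors 'rV[R]_n,
   bounds l_i, u_i are extended reals (\bar R) to allow -oo / +oo. *)
From HB Require Import structures.
From mathcomp Require Import all_boot all_order all_algebra all_fingroup.
From mathcomp Require Import all_classical all_reals all_analysis.
Set Implicit Arguments. Unset Strict Implicit. Unset Printing Implicit Defensive.
Import Order.TTheory GRing.Theory Num.Theory.
Import numFieldNormedType.Exports.
Local Open Scope classical_set_scope.
Local Open Scope ring_scope.

Definition evec (R : realType) (n : nat) (i : 'I_n) : 'rV[R]_n := delta_mx 0 i.

Definition pgrad (R : realType) (n : nat) (f : 'rV[R]_n -> R) (x : 'rV[R]_n)
  (i : 'I_n) : R := 'D_(evec R i) f x.

Definition gradv (R : realType) (n : nat) (f : 'rV[R]_n -> R) (x : 'rV[R]_n)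
  : 'rV[R]_n := \row_i pgrad f x i.

Definition gdot (R : realType) (n : nat) (f : 'rV[R]_n -> R) (x d : 'rV[R]_n) : R :=
  \sum_i gradv f x 0 i * d 0 i.

Definition feasible (R : realType) (n : nat) (l u : 'I_n -> \bar R) (b : R)
  (x : 'rV[R]_n) : Prop :=
  \sum_i x 0 i = b /\ (forall i, (l i <= (x 0 i)%:E)%E /\ ((x 0 i)%:E <= u i)%E).

Definition Dh (R : realType) (n : nat) (l u : 'I_n -> \bar R) (x : 'rV[R]_n)
  (h : 'I_n) : \bar R :=
  mine ((x 0 h)%:E - l h)%E (u h - (x 0 h)%:E)%E.

Definition Dmax (R : realType) (n : nat) (l u : 'I_n -> \bar R) (x : 'rV[R]_n)
  : \bar R := (\big[maxe/-oo]_h Dh l u x h)%E.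

Definition active (R : realType) (n : nat) (l u : 'I_n -> \bar R) (x : 'rV[R]_n)
  : set 'I_n := [set i | (x 0 i)%:E = l i \/ (x 0 i)%:E = u i].

(* maximal feasible step bar alpha along d = g (e_p - e_j) *)
Definition alphabar (R : realType) (n : nat) (l u : 'I_n -> \bar R)
  (z : 'rV[R]_n) (p j : 'I_n) (g : R) : \bar R :=
  if 0 < g then (mine (u p - (z 0 p)%:E) ((z 0 j)%:E - l j) * (g^-1)%:E)%E
  else if g < 0 then (mine ((z 0 p)%:E - l p) (u j - (z 0 j)%:E) * (`|g|^-1)%:E)%E
  else 0%E.

Definition armijo (R : realType) (n : nat) (f : 'rV[R]_n -> R) (gamma : R)
  (z d : 'rV[R]_n) (a : R) : Prop :=
  f (z + a *: d) <= f z + gamma * a * gdot f z d.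

(* One inner iteration (k,i) of AC2CD: from zc to znext, with working index j,
   index p = p^k_i, and chosen A = A^{k,i}.  The line search starts from
   Delta = min{bar alpha, A} and multiplies by delta until Armijo holds, so the
   accepted step is Delta * delta^m with m the least such exponent. *)
Definition inner_step (R : realType) (n : nat) (f : 'rV[R]_n -> R)
  (l u : 'I_n -> \bar R) (gamma delta Al Au : R) (j p : 'I_n) (A : R)
  (zc znext : 'rV[R]_n) : Prop :=
  let g := pgrad f zc j - pgrad f zc p in
  let d := g *: (evec R p - evec R j) in
  let Delta := fine (mine (alphabar l u zc p j g) A%:E) in
  Al <= A <= Au /\
  exists m : nat,
    armijo f gamma zc d (Delta * delta ^+ m) /\
    (forall m' : nat, (m' < m)%N -> not (armijo f gamma zc d (Delta * delta ^+ m'))) /\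
    znext = zc + (Delta * delta ^+ m) *: d.

(* x is a sequence of outer iterates produced by AC2CD from x0 with the given
   parameters, with working indices jsel k = j(k), permutations perm k,
   inner iterates z k i (z k 0 = z^{k,1}, ..., z k n = z^{k,n+1}) and
   trial steps Asel k i = A^{k,i+1}. *)
Definition AC2CD_run (R : realType) (n : nat) (f : 'rV[R]_n -> R)
  (l u : 'I_n -> \bar R) (tau gamma delta Al Au : R) (x0 : 'rV[R]_n)
  (x : nat -> 'rV[R]_n) (jsel : nat -> 'I_n) (perm : nat -> 'S_n)
  (z : nat -> nat -> 'rV[R]_n) (Asel : nat -> nat -> R) : Prop :=
  x 0%N = x0 /\
  (forall k, (Dh l u (x k) (jsel k) >= tau%:E * Dmax l u (x k))%E) /\
  (forall k, z k 0%N = x k) /\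
  (forall k, x k.+1 = z k n) /\
  (forall k (i : 'I_n),
      inner_step f l u gamma delta Al Au (jsel k) (perm k i) (Asel k i)
        (z k i) (z k i.+1)).

From HB Require Import structures.
From mathcomp Require Import all_boot all_order all_algebra all_fingroup.
From mathcomp Require Import all_classical all_reals all_analysis.
From mathcomp Require Import ring.
Import Order.TTheory GRing.Theory Num.Theory.
Import numFieldNormedType.Exports.
Local Open Scope classical_set_scope.
Local Open Scope ring_scope.

(* Write e = ||x^k - x*||_oo.  If j = j(k) were active at x*, then D_j(x^k) <= e,
   while D_h is 1-Lipschitz in x_h, so D*_max <= D_max(x^k) + e.  The selection
   rule tau D_max(x^k) <= D_j(x^k) then gives tau D*_max <= (1 + tau) e,
   contradicting e < tau / (tau + 1) D*_max. *)

Lemma distr_mx_entry_le {K : realDomainType} {m n : nat} (M N : 'M[K]_(m, n)) i j :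
  `|M i j - N i j| <= `|M - N|.
Proof.
rewrite [leRHS]/Num.Def.normr /= mx_normrE.
have := le_bigmax 0 (fun ij : 'I_m * 'I_n => `|(M - N) ij.1 ij.2|) (i, j).
by rewrite !mxE.
Qed.

Lemma leeD_EFin_dist {R : realDomainType} (a : \bar R) (r s : R) :
  (a + r%:E <= a + s%:E + `|r - s|%:E)%E.
Proof.
case: a => [a| |] //=.
by rewrite lee_fin -addrA lerD2l -lerBlDl ler_norm.
Qed.

Section Dh_Dmax.
Context {R : realType} {n : nat} (l u : 'I_n -> \bar R).

Lemma Dh_le_Dmax x h : (Dh l u x h <= Dmax l u x)%E.
Proof. by rewrite /Dmax (bigD1 h) //= le_max lexx. Qed.

Lemma Dmax_le x c : (forall h, Dh l u x h <= c)%E -> (Dmax l u x <= c)%E.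
Proof.
move=> Dh_le; rewrite /Dmax; elim/big_ind: _ => //; first exact: leNye.
by move=> a b ha hb; rewrite ge_max ha hb.
Qed.

Lemma Dh_lipschitz x y h :
  (Dh l u x h <= Dh l u y h + `|x 0 h - y 0 h|%:E)%E.
Proof.
have lower : ((x 0 h)%:E - l h <= (y 0 h)%:E - l h + `|x 0 h - y 0 h|%:E)%E.
  by rewrite ![(_ - l h)%E]addeC leeD_EFin_dist.
have upper : (u h - (x 0 h)%:E <= u h - (y 0 h)%:E + `|x 0 h - y 0 h|%:E)%E.
  by have := leeD_EFin_dist (u h) (- x 0 h) (- y 0 h); rewrite -opprD normrN !EFinN.
rewrite /Dh ge_min; apply/orP.
(* [leP] also replaces the minimum on the right by the smaller argument. *)
by have [_|_] := leP ((y 0 h)%:E - l h)%E (u h - (y 0 h)%:E)%E; [left|right].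
Qed.

Lemma Dmax_lipschitz x y : (Dmax l u x <= Dmax l u y + `|x - y|%:E)%E.
Proof.
apply: Dmax_le => h; apply: (le_trans (Dh_lipschitz x y h)).
apply: leeD; first exact: Dh_le_Dmax.
by rewrite lee_fin distr_mx_entry_le.
Qed.

Lemma Dh_active_le x {y h} : active l u y h -> (Dh l u x h <= `|x 0 h - y 0 h|%:E)%E.
Proof.
rewrite /Dh ge_min => -[<-|<-]; apply/orP; [left|right].
  by rewrite -EFinB lee_fin ler_norm.
by rewrite -EFinB lee_fin distrC ler_norm.
Qed.

Lemma selected_active_Dmax_le {tau : R} {x y j} :
  0 < tau -> (tau%:E * Dmax l u x <= Dh l u x j)%E -> active l u y j ->
  ((tau / (tau + 1))%:E * Dmax l u y <= `|x - y|%:E)%E.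
Proof.
move=> tau_gt0 selected act; set e := `|x - y|.
have tau1_gt0 : 0 < tau + 1 by rewrite addr_gt0.
have Dxj : (Dh l u x j <= e%:E)%E.
  by rewrite (le_trans (Dh_active_le x act)) // lee_fin distr_mx_entry_le.
have Dx : (Dmax l u x <= (tau^-1 * e)%:E)%E.
  by rewrite EFinM lee_pdivlMl // (le_trans selected Dxj).
have Dy : (Dmax l u y <= ((tau^-1 + 1) * e)%:E)%E.
  rewrite (le_trans (Dmax_lipschitz y x)) // distrC mulrDl mul1r EFinD.
  exact: leeD2r.
apply: (le_trans (lee_wpmul2l _ Dy)); first by rewrite lee_fin divr_ge0 ?ltW.
rewrite -EFinM (_ : _ * _ = e) //.
by field; rewrite !gt_eqF.
Qed.

End Dh_Dmax.

Theorem proposition1 (R : realType) (n : nat) (f : 'rV[R]_n -> R)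
  (l u : 'I_n -> \bar R) (b : R) (tau gamma delta Al Au : R) (x0 : 'rV[R]_n)
  (x : nat -> 'rV[R]_n) (jsel : nat -> 'I_n) (perm : nat -> 'S_n)
  (z : nat -> nat -> 'rV[R]_n) (Asel : nat -> nat -> R)
  (xstar : 'rV[R]_n) (kj : nat) :
  (* problem data *)
  (2 <= n)%N ->
  (forall i, l i <> +oo%E) -> (forall i, u i <> -oo%E) ->
  (forall i, (l i < u i)%E) ->
  (forall x, differentiable f x) ->
  (forall i, continuous (fun x => pgrad f x i)) ->
  (exists L : R, forall x y, `|gradv f x - gradv f y| <= L * `|x - y|) ->
  (* parameters and starting point *)
  0 < tau <= 1 -> 0 < gamma < 1 -> 0 < delta < 1 -> 0 < Al -> Al <= Au ->
  feasible l u b x0 ->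
  (* standing assumptions *)
  compact [set y | feasible l u b y /\ f y <= f x0] ->
  (forall y, feasible l u b y -> f y <= f x0 ->
     exists i, (l i < (y 0 i)%:E)%E /\ ((y 0 i)%:E < u i)%E) ->
  (* x is produced by AC2CD and converges to xstar *)
  AC2CD_run f l u tau gamma delta Al Au x0 x jsel perm z Asel ->
  x @ \oo --> xstar ->
  (* kj is the first index from which on ||x^k - x*||_oo < tau/(tau+1) D*_max *)
  (forall k, (kj <= k)%N ->
     ((`|x k - xstar|)%:E < (tau / (tau + 1))%:E * Dmax l u xstar)%E) ->
  (forall k', (k' < kj)%N -> exists k, (k' <= k)%N /\
     ~ ((`|x k - xstar|)%:E < (tau / (tau + 1))%:E * Dmax l u xstar)%E) ->
  forall k, (kj <= k)%N -> ~ active l u xstar (jsel k).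
Proof.
move=> _ _ _ _ _ _ _ /andP[tau_gt0 _] _ _ _ _ _ _ _ [_ [selection _]] _ close _ k le_kj_k.
move=> /(selected_active_Dmax_le l u tau_gt0 (selection k)).
by rewrite leNgt close.
Qed.
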